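(* If $\vec t\succ^*\vec t'_1$ and $\vec t\succ^*\vec t'_2$, then there is a term distribution $\vec t''$ such that $\vec t'_1\succ^*\vec t''$ and $\vec t'_2\succ^*\vec t''$.
   Context: Calculus. Pure values: $v,w::=x\mid\lambda x.\vec{s}\mid *\mid (v_1,v_2)\mid \mathtt{inl}(v)\mid\mathtt{inr}(v)$. Pure terms: $s,t::=v\mid s\,t\mid t;\vec{s}\mid \mathtt{let}\,(x_1,x_2)=t\,\mathtt{in}\,\vec{s}\mid \mathtt{match}\,t\,\{\mathtt{inl}\,x_1\mapsto\vec{s}_1\mid\mathtt{inr}\,x_2\mapsto\vec{s}_2\}$. Term distributions $\vec{t}::=\vec{0}\mid t\mid \vec{s}+\vec{t}\mid\alpha\cdot\vec{t}$ ($\alpha\in\mathbb{C}$). Top-level distributions are identified modulo the congruence generated by $\vec t+\vec0=\vec t$, $1\cdot\vec t=\vec t$, $\alpha\cdot(\beta\cdot\vec t)=\alpha\beta\cdot\vec t$, commutativity and associativity of $+$, $(\alpha+\beta)\cdot\vec t=\alpha\cdot\vec t+\beta\cdot\vec t$, $\alpha\cdot(\vec t_1+\vec t_2)=\alpha\cdot\vec t_1+\alpha\cdot\vec t_2$; it does not act inside pure terms, and $0\cdot t\neq\vec0$. Constructs are extended by linearity: pairs and application bilinear ($(\sum_k\gamma_kt_k)(\sum_l\delta_ls_l)=\sum_{k,l}\gamma_k\delta_lt_ks_l$), $\mathtt{inl},\mathtt{inr}$ linear, $\vec t;\vec s=\sum_k\gamma_k(t_k;\vec s)$ and similarly let and match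 linear in their first argument. Atomic evaluation $t\triangleright\vec t'$: $(\lambda x.\vec t)\,v\triangleright\vec t[x:=v]$; $*;\vec s\triangleright\vec s$; $\mathtt{let}\,(x,y)=(v,w)\,\mathtt{in}\,\vec s\triangleright\vec s[x:=v,y:=w]$; $\mathtt{match}\,\mathtt{inl}(v)\{\ldots\}\triangleright\vec s_1[x_1:=v]$; $\mathtt{match}\,\mathtt{inr}(v)\{\ldots\}\triangleright\vec s_2[x_2:=v]$; and if $t\triangleright\vec t'$ then $s\,t\triangleright s\,\vec t'$, $t\,v\triangleright\vec t'\,v$, $t;\vec s\triangleright\vec t';\vec s$, $\mathtt{let}\,(x,y)=t\,\mathtt{in}\,\vec s\triangleright\mathtt{let}\,(x,y)=\vec t'\,\mathtt{in}\,\vec s$, $\mathtt{match}\,t\{\ldots\}\triangleright\mathtt{match}\,\vec t'\{\ldots\}$ ($v,w$ pure values, $[x:=v]$ capture-avoiding substitution). One-step evaluation: $\vec t\succ\vec t'$ iff there are $\alpha\in\mathbb C$, a pure term $s$ and distributions $\vec s',\vec r$ with $\vec t=\alpha\cdot s+\vec r$, $\vec t'=\alpha\cdot\vec s'+\vec r$, $s\triangleright\vec s'$. $\succ^*$ is the reflexive-transitive closure of $\succ$. *)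

From Stdlib Require Import Reals Relations.
From Coquelicot Require Import Complex.

(* Binders: Lam binds 1 variable in its body; Let binds 2 variables in its body
   (x1 = index 1, x2 = index 0); each Match branch binds 1 variable. *)
Inductive val : Type :=
  | Var : nat -> val
  | Lam : tdist -> val
  | Star : val
  | Pair : val -> val -> val
  | Inl : val -> val
  | Inr : val -> val
with term : Type :=
  | Val : val -> term
  | App : term -> term -> term
  | Seq : term -> tdist -> term
  | Let : term -> tdist -> term
  | Match : term -> tdist -> tdist -> term
with tdist : Type :=
  | DZero : tdist
  | DPure : term -> tdist
  | DPlus : tdist -> tdist -> tdist
  | DScale : C -> tdist -> tdist.

Definition upren (xi : nat -> nat) : nat -> nat :=
  fun n => match n with 0 => 0 | S m => S (xi m) end.

Fixpoint ren_val (xi : nat -> nat) (v : val) : val :=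
  match v with
  | Var n => Var (xi n)
  | Lam d => Lam (ren_dist (upren xi) d)
  | Star => Star
  | Pair v1 v2 => Pair (ren_val xi v1) (ren_val xi v2)
  | Inl v1 => Inl (ren_val xi v1)
  | Inr v1 => Inr (ren_val xi v1)
  end
with ren_term (xi : nat -> nat) (t : term) : term :=
  match t with
  | Val v => Val (ren_val xi v)
  | App s u => App (ren_term xi s) (ren_term xi u)
  | Seq u d => Seq (ren_term xi u) (ren_dist xi d)
  | Let u d => Let (ren_term xi u) (ren_dist (upren (upren xi)) d)
  | Match u d1 d2 => Match (ren_term xi u) (ren_dist (upren xi) d1) (ren_dist (upren xi) d2)
  end
with ren_dist (xi : nat -> nat) (d : tdist) : tdist :=
  match d with
  | DZero => DZero
  | DPure t => DPure (ren_term xi t)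
  | DPlus d1 d2 => DPlus (ren_dist xi d1) (ren_dist xi d2)
  | DScale a d1 => DScale a (ren_dist xi d1)
  end.

Definition up (sigma : nat -> val) : nat -> val :=
  fun n => match n with 0 => Var 0 | S m => ren_val S (sigma m) end.

Fixpoint subst_val (sigma : nat -> val) (v : val) : val :=
  match v with
  | Var n => sigma n
  | Lam d => Lam (subst_dist (up sigma) d)
  | Star => Star
  | Pair v1 v2 => Pair (subst_val sigma v1) (subst_val sigma v2)
  | Inl v1 => Inl (subst_val sigma v1)
  | Inr v1 => Inr (subst_val sigma v1)
  end
with subst_term (sigma : nat -> val) (t : term) : term :=
  match t with
  | Val v => Val (subst_val sigma v)
  | App s u => App (subst_term sigma s) (subst_term sigma u)
  | Seq u d => Seq (subst_term sigma u) (subst_dist sigma d)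
  | Let u d => Let (subst_term sigma u) (subst_dist (up (up sigma)) d)
  | Match u d1 d2 =>
      Match (subst_term sigma u) (subst_dist (up sigma) d1) (subst_dist (up sigma) d2)
  end
with subst_dist (sigma : nat -> val) (d : tdist) : tdist :=
  match d with
  | DZero => DZero
  | DPure t => DPure (subst_term sigma t)
  | DPlus d1 d2 => DPlus (subst_dist sigma d1) (subst_dist sigma d2)
  | DScale a d1 => DScale a (subst_dist sigma d1)
  end.

Definition subst1 (v : val) (d : tdist) : tdist :=
  subst_dist (fun n => match n with 0 => v | S m => Var m end) d.

Definition subst2 (v w : val) (d : tdist) : tdist :=
  subst_dist (fun n => match n with 0 => w | 1 => v | S (S m) => Var m end) d.

(* Linear extension of a construct in one distribution argument:
   F(sum_k g_k t_k) = sum_k g_k F(t_k), computed leafwise. *)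
Fixpoint dmap (f : term -> term) (d : tdist) : tdist :=
  match d with
  | DZero => DZero
  | DPure t => DPure (f t)
  | DPlus d1 d2 => DPlus (dmap f d1) (dmap f d2)
  | DScale a d1 => DScale a (dmap f d1)
  end.

Inductive atom : term -> tdist -> Prop :=
  | at_beta : forall d v, atom (App (Val (Lam d)) (Val v)) (subst1 v d)
  | at_seq : forall d, atom (Seq (Val Star) d) d
  | at_let : forall v w d, atom (Let (Val (Pair v w)) d) (subst2 v w d)
  | at_inl : forall v d1 d2, atom (Match (Val (Inl v)) d1 d2) (subst1 v d1)
  | at_inr : forall v d1 d2, atom (Match (Val (Inr v)) d1 d2) (subst1 v d2)
  | at_app_r : forall s t d', atom t d' -> atom (App s t) (dmap (App s) d')
  | at_app_l : forall t v d', atom t d' ->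
      atom (App t (Val v)) (dmap (fun u => App u (Val v)) d')
  | at_seq_ctx : forall t d' d, atom t d' ->
      atom (Seq t d) (dmap (fun u => Seq u d) d')
  | at_let_ctx : forall t d' d, atom t d' ->
      atom (Let t d) (dmap (fun u => Let u d) d')
  | at_match_ctx : forall t d' d1 d2, atom t d' ->
      atom (Match t d1 d2) (dmap (fun u => Match u d1 d2) d') .

(* The congruence on top-level distributions (does not act inside pure terms) *)
Inductive dequiv : tdist -> tdist -> Prop :=
  | deq_refl : forall d, dequiv d d
  | deq_sym : forall d1 d2, dequiv d1 d2 -> dequiv d2 d1
  | deq_trans : forall d1 d2 d3, dequiv d1 d2 -> dequiv d2 d3 -> dequiv d1 d3
  | deq_plus : forall d1 d1' d2 d2', dequiv d1 d1' -> dequiv d2 d2' ->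
      dequiv (DPlus d1 d2) (DPlus d1' d2')
  | deq_scale : forall a d d', dequiv d d' -> dequiv (DScale a d) (DScale a d')
  | deq_zero : forall d, dequiv (DPlus d DZero) d
  | deq_one : forall d, dequiv (DScale (RtoC 1%R) d) d
  | deq_scale_scale : forall a b d, dequiv (DScale a (DScale b d)) (DScale (Cmult a b) d)
  | deq_comm : forall d1 d2, dequiv (DPlus d1 d2) (DPlus d2 d1)
  | deq_assoc : forall d1 d2 d3,
      dequiv (DPlus (DPlus d1 d2) d3) (DPlus d1 (DPlus d2 d3))
  | deq_distr_scalar : forall a b d,
      dequiv (DScale (Cplus a b) d) (DPlus (DScale a d) (DScale b d))
  | deq_distr_dist : forall a d1 d2,
      dequiv (DScale a (DPlus d1 d2)) (DPlus (DScale a d1) (DScale a d2)).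

Definition step (d d' : tdist) : Prop :=
  exists (a : C) (s : term) (s' r : tdist),
    atom s s' /\
    dequiv d (DPlus (DScale a (DPure s)) r) /\
    dequiv d' (DPlus (DScale a s') r).

(* Reflexive-transitive closure, on equivalence classes (hence the dequiv case) *)
Definition steps : tdist -> tdist -> Prop :=
  clos_refl_trans tdist (fun d d' => step d d' \/ dequiv d d').

From Stdlib Require Import Reals Relations.
From Coquelicot Require Import Complex.
From Stdlib Require Import Bool Btauto Lia Setoid Morphisms Wf_nat Classical ClassicalEpsilon.

(* A distribution is determined up to the congruence by its support (the pure
   terms occurring in it: since [0 t] is not [0], zero coefficients are not
   forgotten) and its coefficient function; conversely two distributions with
   the same support and coefficients are congruent, by repeatedly extracting a
   leaf [c u].  Atomic evaluation is deterministic, so a step from [x] is fixed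
   by a redex [s], a weight [a] and whether [s] survives in the rest of [x].
   Steps on different redexes commute; two steps on the same redex with weights
   [a1], [a2] are joined by firing it again with weight [a2 - a1], unless one of
   them consumed [s] completely, in which case the other one reaches it in one
   more step.  Hence "step or congruence" has the diamond property, and the
   strip lemma gives confluence of its reflexive-transitive closure. *)

Local Open Scope C_scope.

Section Diamond.

Variables (A : Type) (R : relation A).

Definition diamond : Prop :=
  forall x y z, R x y -> R x z -> exists w, R y w /\ R z w.

Hypothesis R_diamond : diamond.

Lemma diamond_strip x y z :
  clos_refl_trans A R x y -> R x z -> exists w, R y w /\ clos_refl_trans A R z w.
Proof.
  intros Hxy; revert z.
  induction Hxy as [x y Hxy | x | x y y' _ IH1 _ IH2]; intros z Hxz.
  - destruct (R_diamond x y z Hxy Hxz) as (w & Hyw & Hzw).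
    exists w; split; [exact Hyw | apply rt_step; exact Hzw].
  - exists z; split; [exact Hxz | apply rt_refl].
  - destruct (IH1 z Hxz) as (w1 & Hyw1 & Hzw1).
    destruct (IH2 w1 Hyw1) as (w & Hy'w & Hw1w).
    exists w; split; [exact Hy'w | eapply rt_trans; eassumption].
Qed.

Lemma diamond_confluent x y z :
  clos_refl_trans A R x y -> clos_refl_trans A R x z ->
  exists w, clos_refl_trans A R y w /\ clos_refl_trans A R z w.
Proof.
  intros Hxy; revert z.
  induction Hxy as [x y Hxy | x | x y y' _ IH1 _ IH2]; intros z Hxz.
  - destruct (diamond_strip x z y Hxz Hxy) as (w & Hzw & Hyw).
    exists w; split; [exact Hyw | apply rt_step; exact Hzw].
  - exists z; split; [exact Hxz | apply rt_refl].
  - destruct (IH1 z Hxz) as (w1 & Hyw1 & Hzw1).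
    destruct (IH2 w1 Hyw1) as (w & Hy'w & Hw1w).
    exists w; split; [exact Hy'w | eapply rt_trans; eassumption].
Qed.

End Diamond.

Definition term_eq_dec (s t : term) : {s = t} + {s <> t} :=
  excluded_middle_informative (s = t).

Definition term_eqb (s t : term) : bool := if term_eq_dec s t then true else false.

Lemma term_eqb_spec s t : reflect (s = t) (term_eqb s t).
Proof. unfold term_eqb; destruct (term_eq_dec s t); constructor; assumption. Qed.

Lemma term_eqb_refl s : term_eqb s s = true.
Proof. destruct (term_eqb_spec s s); congruence. Qed.

Lemma term_eqb_neq s t : s <> t -> term_eqb s t = false.
Proof. destruct (term_eqb_spec s t); congruence. Qed.

Definition delta (s t : term) : C := if term_eqb s t then RtoC 1 else RtoC 0.
Arguments delta : simpl never.

Lemma delta_same s : delta s s = RtoC 1.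
Proof. unfold delta; rewrite term_eqb_refl; reflexivity. Qed.

Lemma delta_neq s t : s <> t -> delta s t = RtoC 0.
Proof. intro H; unfold delta; rewrite term_eqb_neq by exact H; reflexivity. Qed.

Fixpoint supp (d : tdist) (v : term) : bool :=
  match d with
  | DZero => false
  | DPure t => term_eqb t v
  | DPlus d1 d2 => supp d1 v || supp d2 v
  | DScale _ d1 => supp d1 v
  end.

Fixpoint coef (d : tdist) (v : term) : C :=
  match d with
  | DZero => RtoC 0
  | DPure t => delta t v
  | DPlus d1 d2 => coef d1 v + coef d2 v
  | DScale a d1 => a * coef d1 v
  end.

Lemma coef_absent d v : supp d v = false -> coef d v = RtoC 0.
Proof.
  induction d as [| t | d1 IH1 d2 IH2 | a d IH]; simpl; intro H.
  - reflexivity.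
  - unfold delta; rewrite H; reflexivity.
  - apply orb_false_iff in H as [H1 H2]. rewrite IH1, IH2 by assumption. ring.
  - rewrite IH by exact H. ring.
Qed.

Lemma dequiv_model d1 d2 : dequiv d1 d2 ->
  (forall v, supp d1 v = supp d2 v) /\ (forall v, coef d1 v = coef d2 v).
Proof.
  induction 1 as [ | d1 d2 _ [IHs IHc] | d1 d2 d3 _ [IHs1 IHc1] _ [IHs2 IHc2]
                 | d1 d1' d2 d2' _ [IHs1 IHc1] _ [IHs2 IHc2] | a d d' _ [IHs IHc] | | | | | | | ];
    split; intro v; simpl.
  all: try (rewrite ?IHs, ?IHc, ?IHs1, ?IHc1, ?IHs2, ?IHc2; reflexivity).
  all: try btauto.
  all: ring.
Qed.

#[local] Instance dequiv_Equivalence : Equivalence dequiv.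
Proof. split; [exact deq_refl | exact deq_sym | exact deq_trans]. Qed.

#[local] Instance DPlus_Proper : Proper (dequiv ==> dequiv ==> dequiv) DPlus.
Proof. intros d1 d1' H1 d2 d2' H2; apply deq_plus; assumption. Qed.

#[local] Instance DScale_Proper a : Proper (dequiv ==> dequiv) (DScale a).
Proof. intros d d' H; apply deq_scale; assumption. Qed.

#[local] Instance step_Proper : Proper (dequiv ==> dequiv ==> iff) step.
Proof.
  intros x x' Hx y y' Hy; split; intros (a & s & D & r & A & Hxr & Hyr);
    exists a, s, D, r; repeat split; try assumption.
  - rewrite <- Hx; exact Hxr.
  - rewrite <- Hy; exact Hyr.
  - rewrite Hx; exact Hxr.
  - rewrite Hy; exact Hyr.
Qed.

(* There is no rule [0 d == DZero]; go through [(0 + 1) DZero == 0 DZero + DZero]. *)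
Lemma scale_zero_zero : dequiv (DScale (RtoC 0) DZero) DZero.
Proof.
  assert (H : dequiv (DScale (RtoC 0 + RtoC 1) DZero) (DScale (RtoC 0) DZero)).
  { rewrite deq_distr_scalar, deq_one, deq_zero. reflexivity. }
  replace (RtoC 0 + RtoC 1) with (RtoC 1) in H by ring.
  rewrite <- H, deq_one. reflexivity.
Qed.

Lemma scale_zero a : dequiv (DScale a DZero) DZero.
Proof.
  rewrite <- scale_zero_zero at 1.
  rewrite deq_scale_scale.
  replace (a * RtoC 0) with (RtoC 0) by ring.
  apply scale_zero_zero.
Qed.

Lemma plus_shuffle d1 d2 d3 d4 :
  dequiv (DPlus (DPlus d1 d2) (DPlus d3 d4)) (DPlus (DPlus d1 d3) (DPlus d2 d4)).
Proof.
  rewrite !deq_assoc, <- (deq_assoc d2 d3 d4), (deq_comm d2 d3), deq_assoc.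
  reflexivity.
Qed.

Fixpoint remove_leaf (u : term) (d : tdist) : tdist :=
  match d with
  | DZero => DZero
  | DPure t => if term_eqb u t then DZero else DPure t
  | DPlus d1 d2 => DPlus (remove_leaf u d1) (remove_leaf u d2)
  | DScale a d1 => DScale a (remove_leaf u d1)
  end.

Fixpoint nleaves (d : tdist) : nat :=
  match d with
  | DZero => 0
  | DPure _ => 1
  | DPlus d1 d2 => nleaves d1 + nleaves d2
  | DScale _ d1 => nleaves d1
  end.

Lemma supp_remove_leaf u d v :
  supp (remove_leaf u d) v = supp d v && negb (term_eqb u v).
Proof.
  induction d as [| t | d1 IH1 d2 IH2 | a d IH]; simpl.
  - reflexivity.
  - destruct (term_eqb_spec u t) as [<- | Hut]; simpl.
    + destruct (term_eqb u v); reflexivity.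
    + destruct (term_eqb_spec t v) as [<- | _]; simpl.
      * rewrite term_eqb_neq by exact Hut. reflexivity.
      * reflexivity.
  - rewrite IH1, IH2. btauto.
  - exact IH.
Qed.

Lemma coef_remove_leaf u d v :
  coef (remove_leaf u d) v = if term_eqb u v then RtoC 0 else coef d v.
Proof.
  induction d as [| t | d1 IH1 d2 IH2 | a d IH]; simpl.
  - destruct (term_eqb u v); reflexivity.
  - destruct (term_eqb_spec u t) as [<- | Hut]; simpl.
    + unfold delta; destruct (term_eqb u v); reflexivity.
    + destruct (term_eqb_spec u v) as [<- | _].
      * apply delta_neq; congruence.
      * reflexivity.
  - rewrite IH1, IH2. destruct (term_eqb u v); [ring | reflexivity].
  - rewrite IH. destruct (term_eqb u v); [ring | reflexivity].
Qed.

Lemma remove_leaf_absent u d : supp d u = false -> remove_leaf u d = d.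
Proof.
  induction d as [| t | d1 IH1 d2 IH2 | a d IH]; simpl; intro H.
  - reflexivity.
  - destruct (term_eqb_spec u t) as [<- | _]; [rewrite term_eqb_refl in H; discriminate | reflexivity].
  - apply orb_false_iff in H as [H1 H2]. rewrite IH1, IH2 by assumption. reflexivity.
  - rewrite IH by exact H. reflexivity.
Qed.

Lemma nleaves_remove_leaf_le u d : nleaves (remove_leaf u d) <= nleaves d.
Proof.
  induction d as [| t | d1 IH1 d2 IH2 | a d IH]; simpl; try lia.
  destruct (term_eqb u t); simpl; lia.
Qed.

Lemma nleaves_remove_leaf_lt u d : supp d u = true -> nleaves (remove_leaf u d) < nleaves d.
Proof.
  induction d as [| t | d1 IH1 d2 IH2 | a d IH]; simpl; intro H.
  - discriminate.
  - destruct (term_eqb_spec t u) as [<- | _]; [rewrite term_eqb_refl; simpl; lia | discriminate].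
  - pose proof (nleaves_remove_leaf_le u d1); pose proof (nleaves_remove_leaf_le u d2).
    apply orb_true_iff in H as [H | H]; [specialize (IH1 H) | specialize (IH2 H)]; lia.
  - exact (IH H).
Qed.

Lemma dequiv_extract u d : supp d u = true ->
  dequiv d (DPlus (DScale (coef d u) (DPure u)) (remove_leaf u d)).
Proof.
  induction d as [| t | d1 IH1 d2 IH2 | a d IH]; simpl; intro H.
  - discriminate.
  - destruct (term_eqb_spec t u) as [<- | _]; [| discriminate].
    rewrite term_eqb_refl, delta_same, deq_zero, deq_one. reflexivity.
  - destruct (supp d1 u) eqn:H1, (supp d2 u) eqn:H2; try discriminate.
    + rewrite (IH1 eq_refl) at 1. rewrite (IH2 eq_refl) at 1.
      rewrite plus_shuffle, <- deq_distr_scalar. reflexivity.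
    + rewrite (IH1 eq_refl) at 1.
      rewrite (coef_absent d2 u H2), (remove_leaf_absent u d2 H2).
      rewrite Cplus_0_r, deq_assoc. reflexivity.
    + rewrite (IH2 eq_refl) at 1.
      rewrite (coef_absent d1 u H1), (remove_leaf_absent u d1 H1).
      rewrite Cplus_0_l, deq_comm, deq_assoc, (deq_comm _ d1). reflexivity.
  - rewrite (IH H) at 1. rewrite deq_distr_dist, deq_scale_scale. reflexivity.
Qed.

Lemma dequiv_empty d : (forall v, supp d v = false) -> dequiv d DZero.
Proof.
  induction d as [| t | d1 IH1 d2 IH2 | a d IH]; simpl; intro H.
  - reflexivity.
  - specialize (H t). rewrite term_eqb_refl in H. discriminate.
  - rewrite IH1, IH2, deq_zero; [reflexivity | |];
      intro v; specialize (H v); apply orb_false_iff in H; tauto.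
  - rewrite IH by exact H. apply scale_zero.
Qed.

Lemma dequiv_of_model d1 d2 :
  (forall v, supp d1 v = supp d2 v) -> (forall v, coef d1 v = coef d2 v) -> dequiv d1 d2.
Proof.
  revert d2.
  induction d1 as [d1 IH] using (well_founded_induction (well_founded_ltof _ nleaves)).
  intros d2 Hs Hc.
  destruct (classic (exists u, supp d1 u = true)) as [[u Hu] | Hempty].
  - rewrite (dequiv_extract u d1 Hu), (dequiv_extract u d2) by (rewrite <- Hs; exact Hu).
    rewrite Hc. apply deq_plus; [reflexivity |].
    apply IH.
    + apply nleaves_remove_leaf_lt, Hu.
    + intro v. rewrite !supp_remove_leaf, Hs. reflexivity.
    + intro v. rewrite !coef_remove_leaf, Hc. reflexivity.
  - assert (H1 : forall v, supp d1 v = false).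
    { intro v. apply not_true_is_false. intro Hv. apply Hempty. exists v. exact Hv. }
    rewrite (dequiv_empty d1 H1), (dequiv_empty d2); [reflexivity |].
    intro v. rewrite <- Hs. apply H1.
Qed.

Lemma atom_val v d : ~ atom (Val v) d.
Proof. intro H; inversion H. Qed.

Lemma atom_deterministic t d1 d2 : atom t d1 -> atom t d2 -> d1 = d2.
Proof.
  intro H1; revert d2.
  induction H1; intros ? H2; inversion H2; subst; try reflexivity;
    try (exfalso; eapply atom_val; eassumption);
    f_equal; auto.
Qed.

(* [y] arises from [x == a s + r] by contracting the redex [s] to [D]; [keep] says
   whether [s] still occurs in [r], which can fail only if [a] is the whole
   coefficient of [s] in [x]. *)
Definition fires (x : tdist) (s : term) (D : tdist) (a : C) (keep : bool) (y : tdist) : Prop :=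
  supp x s = true /\ (keep = false -> coef x s = a) /\
  (forall v, supp y v = supp D v || supp x v && (keep || negb (term_eqb s v))) /\
  (forall v, coef y v = coef x v + a * (coef D v - delta s v)).

Definition rest (x : tdist) (s : term) (a : C) (keep : bool) : tdist :=
  if keep then DPlus x (DScale (- a) (DPure s)) else remove_leaf s x.

Section Rest.

Variables (x : tdist) (s : term) (a : C) (keep : bool).
Hypothesis x_s : supp x s = true.
Hypothesis coef_x_s : keep = false -> coef x s = a.

Lemma supp_rest v : supp (rest x s a keep) v = supp x v && (keep || negb (term_eqb s v)).
Proof.
  unfold rest; destruct keep; simpl.
  - destruct (term_eqb_spec s v) as [<- | _]; rewrite ?x_s; btauto.
  - apply supp_remove_leaf.
Qed.

Lemma coef_rest v : coef (rest x s a keep) v = coef x v - a * delta s v.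
Proof.
  unfold rest; destruct keep; simpl.
  - ring.
  - rewrite coef_remove_leaf. unfold delta.
    destruct (term_eqb_spec s v) as [<- | _]; [rewrite coef_x_s by reflexivity |]; ring.
Qed.

Lemma dequiv_redex_rest : dequiv x (DPlus (DScale a (DPure s)) (rest x s a keep)).
Proof.
  apply dequiv_of_model; intro v; simpl; rewrite ?supp_rest, ?coef_rest.
  - destruct (term_eqb_spec s v) as [<- | _]; rewrite ?x_s; btauto.
  - ring.
Qed.

Lemma fires_reduct D : fires x s D a keep (DPlus (DScale a D) (rest x s a keep)).
Proof.
  repeat split; try assumption; intro v; simpl.
  - rewrite supp_rest. reflexivity.
  - rewrite coef_rest. ring.
Qed.

Lemma step_reduct D : atom s D -> step x (DPlus (DScale a D) (rest x s a keep)).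
Proof.
  intro A. exists a, s, D, (rest x s a keep).
  split; [exact A | split; [exact dequiv_redex_rest | reflexivity]].
Qed.

End Rest.

Lemma fires_step {x s D a keep y} : atom s D -> fires x s D a keep y -> step x y.
Proof.
  intros A F. pose proof F as (x_s & coef_x_s & Hys & Hyc).
  destruct (fires_reduct x s a keep x_s coef_x_s D) as (_ & _ & Hws & Hwc).
  rewrite (dequiv_of_model y (DPlus (DScale a D) (rest x s a keep))).
  - exact (step_reduct x s a keep x_s coef_x_s D A).
  - intro v. rewrite Hys, Hws. reflexivity.
  - intro v. rewrite Hyc, Hwc. reflexivity.
Qed.

Lemma step_fires {x y} : step x y -> exists s D a keep, atom s D /\ fires x s D a keep y.
Proof.
  intros (a & s & D & r & A & Hx & Hy).
  destruct (dequiv_model _ _ Hx) as [Hxs Hxc], (dequiv_model _ _ Hy) as [Hys Hyc].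
  simpl in Hxs, Hxc, Hys, Hyc.
  exists s, D, a, (supp r s). split; [exact A |].
  repeat split.
  - rewrite Hxs, term_eqb_refl. reflexivity.
  - intro Hr. rewrite Hxc, coef_absent, delta_same by exact Hr. ring.
  - intro v. rewrite Hys, Hxs.
    destruct (term_eqb_spec s v) as [<- | _]; rewrite ?term_eqb_refl; btauto.
  - intro v. rewrite Hyc, Hxc. ring.
Qed.

Ltac case_term_eqb :=
  repeat match goal with
  | |- context [term_eqb ?s ?t] => destruct (term_eqb_spec s t) as [<- | ?]
  end.

Lemma fires_commute {x s1 D1 a1 k1 y s2 D2 a2 k2 z} :
  s1 <> s2 -> fires x s1 D1 a1 k1 y -> fires x s2 D2 a2 k2 z ->
  exists w, fires y s2 D2 a2 (k2 || supp D1 s2) w /\ fires z s1 D1 a1 (k1 || supp D2 s1) w.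
Proof.
  intros Hne (Hx1 & Hk1 & Hys & Hyc) (Hx2 & Hk2 & Hzs & Hzc).
  assert (Hy2 : supp y s2 = true)
    by (rewrite Hys, Hx2, term_eqb_neq by exact Hne; btauto).
  assert (Hky : k2 || supp D1 s2 = false -> coef y s2 = a2).
  { intro H. apply orb_false_iff in H as [Hk HD].
    rewrite Hyc, (coef_absent D1), delta_neq, Hk2 by assumption. ring. }
  pose proof (fires_reduct y s2 a2 _ Hy2 Hky D2) as Fy.
  eexists; split; [exact Fy |].
  destruct Fy as (_ & _ & Hws & Hwc).
  repeat split.
  - rewrite Hzs, Hx1, term_eqb_neq by congruence. btauto.
  - intro H. apply orb_false_iff in H as [Hk HD].
    rewrite Hzc, (coef_absent D2), delta_neq, Hk1 by (assumption || congruence). ring.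
  - intro v. rewrite Hws, Hys, Hzs.
    case_term_eqb; try congruence; rewrite ?Hx1, ?Hx2; btauto.
  - intro v. rewrite Hwc, Hyc, Hzc. ring.
Qed.

Lemma fires_same_redex_present {x s D a1 k1 y a2 k2 z} :
  fires x s D a1 k1 y -> fires x s D a2 k2 z -> supp y s = true -> supp z s = true ->
  fires y s D (a2 - a1) true z.
Proof.
  intros (_ & _ & Hys & Hyc) (_ & _ & Hzs & Hzc) Hy Hz.
  repeat split; [exact Hy | discriminate | |].
  - intro v. destruct (term_eqb_spec s v) as [<- | Hsv].
    + rewrite Hy, Hz. btauto.
    + rewrite Hzs, Hys, term_eqb_neq by exact Hsv. btauto.
  - intro v. rewrite Hzc, Hyc. ring.
Qed.

(* [s] no longer occurs in [y], so [a1] was all of its weight in [x]: [z] reaches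
   [y] by firing the remaining weight [a1 - a2], or is already congruent to it. *)
Lemma fires_same_redex_absent {x s D a1 k1 y a2 k2 z} :
  atom s D -> fires x s D a1 k1 y -> fires x s D a2 k2 z -> supp y s = false ->
  step z y \/ dequiv z y.
Proof.
  intros A (Hx & Hk1 & Hys & Hyc) (_ & Hk2 & Hzs & Hzc) Hy.
  assert (HDk1 : supp D s = false /\ k1 = false).
  { rewrite Hys, Hx, term_eqb_refl in Hy. apply orb_false_iff. rewrite <- Hy. btauto. }
  destruct HDk1 as [HD Hk1f].
  destruct (supp z s) eqn:Hz.
  - left. apply (fires_step (a := a1 - a2) (keep := false) A). repeat split; [exact Hz | | |].
    + intros _. rewrite Hzc, Hk1, coef_absent, delta_same by assumption. ring.
    + intro v. destruct (term_eqb_spec s v) as [<- | Hsv].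
      * rewrite Hy, HD. btauto.
      * rewrite Hys, Hzs, term_eqb_neq by exact Hsv. btauto.
    + intro v. rewrite Hyc, Hzc. ring.
  - right. assert (Hk2f : k2 = false).
    { rewrite Hzs, Hx, term_eqb_refl, HD in Hz. rewrite <- Hz. btauto. }
    assert (Ha : a2 = a1) by (rewrite <- (Hk2 Hk2f); exact (Hk1 Hk1f)).
    apply dequiv_of_model; intro v.
    + rewrite Hzs, Hys, Hk1f, Hk2f. reflexivity.
    + rewrite Hzc, Hyc, Ha. reflexivity.
Qed.

Lemma step_diamond x y z : step x y -> step x z ->
  exists w, (step y w \/ dequiv y w) /\ (step z w \/ dequiv z w).
Proof.
  intros Hy Hz.
  destruct (step_fires Hy) as (s1 & D1 & a1 & k1 & A1 & F1).
  destruct (step_fires Hz) as (s2 & D2 & a2 & k2 & A2 & F2).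
  destruct (term_eq_dec s1 s2) as [<- | Hne].
  - rewrite (atom_deterministic s1 D2 D1 A2 A1) in F2.
    destruct (supp y s1) eqn:Hys; [destruct (supp z s1) eqn:Hzs |].
    + exists z. split; [left | right; reflexivity].
      exact (fires_step A1 (fires_same_redex_present F1 F2 Hys Hzs)).
    + exists z. split; [exact (fires_same_redex_absent A1 F2 F1 Hzs) | right; reflexivity].
    + exists y. split; [right; reflexivity | exact (fires_same_redex_absent A1 F1 F2 Hys)].
  - destruct (fires_commute Hne F1 F2) as (w & Fy & Fz).
    exists w. split; left; [exact (fires_step A2 Fy) | exact (fires_step A1 Fz)].
Qed.

Lemma step_or_dequiv_diamond : diamond tdist (fun d d' => step d d' \/ dequiv d d').
Proof.
  intros x y z [Hy | Hy] [Hz | Hz].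
  - exact (step_diamond x y z Hy Hz).
  - exists y. split; [right; reflexivity | left; rewrite <- Hz; exact Hy].
  - exists z. split; [left; rewrite <- Hy; exact Hz | right; reflexivity].
  - exists y. split; [right; reflexivity | right; rewrite <- Hz; exact Hy].
Qed.

Theorem mainTheorem7 (t t1 t2 : tdist) :
  steps t t1 -> steps t t2 ->
  exists t'' : tdist, steps t1 t'' /\ steps t2 t''.
Proof.
  apply diamond_confluent, step_or_dequiv_diamond.
Qed.
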